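(* There exists a Stackelberg game $(G,L,F)$ such that $\mathcal{X}^{PS\text{-}NF}\not\subseteq\mathcal{X}^S$, where $\mathcal{X}^S$ refers to $(G,L,F)$ and $\mathcal{X}^{PS\text{-}NF}$ refers to $(G,N,\emptyset)$.
   Context: A finite game is $G=(N,\{S_p\}_{p\in N},\{u_p\}_{p\in N})$ with players $N=\{1,\dots,n\}$, finite nonempty strategy sets $S_p$, and utilities $u_p:S\to\mathbb{R}$ on $S=\prod_{p\in N}S_p$; write $s=(s_p,s_{-p})$ with $s_{-p}\in S_{-p}=\prod_{q\neq p}S_q$. $\mathcal{X}=\Delta(S)$ is the set of probability distributions on $S$ and $u_p(x)=\sum_{s\in S}x(s)u_p(s)$ for $x\in\mathcal{X}$. For $P\subseteq N$, $\mathcal{X}^{CE}_P$ is the set of $x\in\mathcal{X}$ such that for every $p\in P$ and all $s_p\neq s_p'\in S_p$: $\sum_{s_{-p}\in S_{-p}} x(s_p,s_{-p})\,(u_p(s_p,s_{-p})-u_p(s_p',s_{-p}))\ge 0$; $\mathcal{X}^{CE}=\mathcal{X}^{CE}_N$ is the set of correlated equilibria of $G$. A Stackelberg game (SG) is a triple $(G,L,F)$ with $L\cup F=N$ and $L\cap F=\emptyset$ (leaders and followers). For $P\subseteq N$, $\Pi_P$ is the set of ordered subsets of $P$ (finite sequences of pairwise distinct elements of $P$, including the empty sequence $\varnothing$); for $\pi\in\Pi_P$ and $p\in P$ not occurring in $\pi$, $\pi p$ is $\pi$ with $p$ appended; when used as a set, $\pi$ means its set of entries. $\mathbf{X}=\prod_{\pi\in\Pi_L}\mathcal{X}^{CE}_{\pi\cup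 F}$, with elements $\mathbf{x}=[x_\pi]_{\pi\in\Pi_L}$. For $\mathbf{x}\in\mathbf{X}$ and $\pi\in\Pi_L$, $x_\pi$ is stable if $u_p(x_\pi)\ge u_p(x_{\pi p})$ for all $p\in L\setminus\pi$; $\mathbf{x}$ is stable if $x_\varnothing$ is stable, and perfectly stable if $x_\pi$ is stable for every $\pi\in\Pi_L$; $\mathbf{X}^{S}$ and $\mathbf{X}^{PS}$ denote the sets of stable and perfectly stable elements of $\mathbf{X}$. $\mathcal{X}^S=\{x_\varnothing:\mathbf{x}\in\mathbf{X}^S\}$ and $\mathcal{X}^{PS}=\{x_\varnothing:\mathbf{x}\in\mathbf{X}^{PS}\}$ (for the given SG). $\mathcal{X}^{S\text{-}NF}$ and $\mathcal{X}^{PS\text{-}NF}$ are the sets $\mathcal{X}^S$ and $\mathcal{X}^{PS}$ computed for the SG $(G,N,\emptyset)$ in which every player is a leader. *)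

From HB Require Import structures.
From mathcomp Require Import all_boot all_order all_algebra.
Set Implicit Arguments. Unset Strict Implicit. Unset Printing Implicit Defensive.
Import Order.TTheory GRing.Theory Num.Theory.
Local Open Scope ring_scope.

Record game (R : rcfType) := Game {
  nplayers : nat;
  strat : 'I_nplayers -> finType;
  strat_nonempty : forall p, (0 < #|strat p|)%N;
  util : 'I_nplayers -> {dffun forall p : 'I_nplayers, strat p} -> R
}.
Arguments nplayers {R} g.
Arguments strat {R} g p.
Arguments util {R} g p s.

Section Defs.
Variable R : rcfType.
Variable G : game R.

Definition player := 'I_(nplayers G).
Definition profile := {dffun forall p : player, strat G p}.

Definition deviate (s : profile) (p : player) (t : strat G p) : profile :=
  [ffun q => dfwith (fun q => s q) t q].

Definition is_dist (x : {ffun profile -> R}) : Prop :=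
  (forall s, 0 <= x s) /\ \sum_(s : profile) x s = 1.

Definition exp_util (p : player) (x : {ffun profile -> R}) : R :=
  \sum_(s : profile) x s * util G p s.

Definition in_CE_P (P : {set player}) (x : {ffun profile -> R}) : Prop :=
  is_dist x /\
  forall p, p \in P -> forall sp sp' : strat G p, sp != sp' ->
    0 <= \sum_(s : profile | s p == sp)
           x s * (util G p s - util G p (deviate s sp')).

(* ordered subsets of L: duplicate-free sequences of elements of L *)
Definition ordsub (L : {set player}) (pi : seq player) : bool :=
  uniq pi && all (fun p => p \in L) pi.

(* bold x = [x_pi]_{pi in Pi_L}, represented as a function on sequences,
   only its values on Pi_L matter *)
Definition in_boldX (L F : {set player}) (xs : seq player -> {ffun profile -> R}) : Prop :=
  forall pi, ordsub L pi -> in_CE_P ([set p | p \in pi] :|: F) (xs pi).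

Definition stable_at (L : {set player}) (xs : seq player -> {ffun profile -> R})
    (pi : seq player) : Prop :=
  forall p, p \in L -> p \notin pi -> exp_util p (xs (rcons pi p)) <= exp_util p (xs pi).

Definition in_XS (L F : {set player}) (x : {ffun profile -> R}) : Prop :=
  exists xs, [/\ in_boldX L F xs, stable_at L xs [::] & xs [::] = x].

Definition in_XPS (L F : {set player}) (x : {ffun profile -> R}) : Prop :=
  exists xs, [/\ in_boldX L F xs,
                 (forall pi, ordsub L pi -> stable_at L xs pi) & xs [::] = x].

Definition in_XS_NF (x : {ffun profile -> R}) : Prop := in_XS setT set0 x.
Definition in_XPS_NF (x : {ffun profile -> R}) : Prop := in_XPS setT set0 x.

End Defs.

From HB Require Import structures.
From mathcomp Require Import all_boot all_order all_algebra.
Set Implicit Arguments. Unset Strict Implicit. Unset Printing Implicit Defensive.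
Import Order.TTheory GRing.Theory Num.Theory.
Local Open Scope ring_scope.

(* A perfectly stable outcome of the all-leaders game need not be stable once
   some players become followers: followers must be obedient at x_∅, while in
   the all-leaders game x_∅ is an arbitrary distribution.

   The counterexample is a two-player game with leader 0 (always paid 0) and
   follower 1, who is paid 2, 1, 0 at (true, true), (true, false) and
   (false, _).  The point mass at (true, false) is perfectly stable in the
   all-leaders game but the follower profits from deviating to true. *)

Section PointMass.
Variable R : rcfType.
Variable G : game R.

Definition dirac (z : profile G) : {ffun profile G -> R} := [ffun s => (s == z)%:R].

Lemma dirac_dist z : is_dist (dirac z).
Proof.
split=> [s|]; first by rewrite ffunE ler0n.
rewrite (bigD1 z) //= big1 ?addr0 => [|s /negbTE]; rewrite ffunE ?eqxx //.
by move->.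
Qed.

Lemma exp_util_dirac p z : exp_util p (dirac z) = util G p z.
Proof.
rewrite /exp_util (bigD1 z) //= big1 ?addr0 => [|s /negbTE].
  by rewrite ffunE eqxx mul1r.
by rewrite ffunE => ->; rewrite mul0r.
Qed.

Lemma obedience_dirac p z (sp sp' : strat G p) :
  \sum_(s : profile G | s p == sp) dirac z s * (util G p s - util G p (deviate s sp'))
  = if z p == sp then util G p z - util G p (deviate z sp') else 0.
Proof.
case: ifP => [zp|zp].
  rewrite (bigD1 z) //= big1 ?addr0 => [|s /andP[_ /negbTE]].
    by rewrite ffunE eqxx mul1r.
  by rewrite ffunE => ->; rewrite mul0r.
rewrite big1 // => s /eqP sp_s; rewrite ffunE.
case: eqP => [sz|_]; last by rewrite mul0r.
by rewrite -sz sp_s eqxx in zp.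
Qed.

Lemma dirac_CE (P : {set player G}) z :
  (forall p, p \in P -> forall t : strat G p, util G p (deviate z t) <= util G p z) ->
  in_CE_P P (dirac z).
Proof.
move=> eqz; split; first exact: dirac_dist.
move=> p pP sp sp' _; rewrite obedience_dirac.
by case: ifP => // _; rewrite subr_ge0 eqz.
Qed.

Lemma deviate_self (z : profile G) p : deviate z (z p) = z.
Proof.
apply/ffunP=> q; rewrite ffunE.
by case: (eqVneq p q) => [<-|pq]; rewrite ?dfwith_in ?dfwith_out.
Qed.

Lemma profitable_deviation_not_CE (P : {set player G}) z p (t : strat G p) :
  p \in P -> util G p z < util G p (deviate z t) -> ~ in_CE_P P (dirac z).
Proof.
move=> pP gain [_ obedient].
have zt : z p != t by apply: contraTneq gain => <-; rewrite deviate_self ltxx.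
have := obedient p pP (z p) t zt; rewrite obedience_dirac eqxx subr_ge0.
by rewrite leNgt gain.
Qed.

End PointMass.

Section StackelbergFacts.
Variable R : rcfType.
Variable G : game R.

(* x_∅ must lie in X^CE_{∅ ∪ F}: stable outcomes are equilibria for followers. *)
Lemma XS_CE_followers (L F : {set player G}) x : in_XS L F x -> in_CE_P F x.
Proof.
case=> xs [inX _ <-]; have := inX [::] isT.
by rewrite (_ : [set p | p \in [::]] = set0) ?set0U //; apply/setP=> p; rewrite !inE.
Qed.

(* With nonnegative utilities and a zero-payoff pure equilibrium z0, every
   distribution is perfectly stable when all players lead: each leader's move
   leads to δ_{z0}, which nobody prefers. *)
Lemma XPS_NF_of_null_equilibrium (z0 : profile G) x :
  (forall p s, 0 <= util G p s) ->
  (forall p, util G p z0 = 0) ->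
  (forall p (t : strat G p), util G p (deviate z0 t) <= 0) ->
  is_dist x -> @in_XPS_NF R G x.
Proof.
move=> util_ge0 null_z0 null_dev xdist.
exists (fun pi => if pi is [::] then x else dirac z0); split => //.
- move=> [|a l] _.
    by split=> // p; rewrite !inE.
  by apply: dirac_CE => p _ t; rewrite null_z0.
- move=> pi _ p _ _; rewrite (_ : (if rcons pi p is [::] then _ else _) = dirac z0);
    last by case: pi.
  rewrite exp_util_dirac null_z0; case: pi => [|a l]; last by rewrite exp_util_dirac null_z0.
  by rewrite /exp_util sumr_ge0 // => s _; rewrite mulr_ge0 //; case: xdist.
Qed.

End StackelbergFacts.

Section Counterexample.
Variable R : rcfType.

Definition ex_strat (p : 'I_2) : finType := bool.

Lemma ex_strat_nonempty p : (0 < #|ex_strat p|)%N.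
Proof. by rewrite card_bool. Qed.

Definition ex_util (p : 'I_2) (s : {dffun forall p : 'I_2, ex_strat p}) : R :=
  if p == 1 then (if s ord0 : bool then (if s 1 : bool then 2 else 1) else 0) else 0.

Definition ex_game : game R := @Game R 2 ex_strat ex_strat_nonempty ex_util.

Definition ex_rec : profile ex_game := [ffun q : 'I_2 => (q == ord0) : ex_strat q].
Definition ex_null : profile ex_game := [ffun q : 'I_2 => false : ex_strat q].

Lemma ex_util_ge0 p s : 0 <= util ex_game p s.
Proof. by rewrite /= /ex_util; case: ifP => // _; case: ifP => // _; case: ifP. Qed.

Lemma ex_util_null p : util ex_game p ex_null = 0.
Proof. by rewrite /= /ex_util ffunE; case: ifP. Qed.

(* Nobody can gain at ex_null: the follower is paid only if the leader plays true. *)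
Lemma ex_util_null_dev p (t : strat ex_game p) :
  util ex_game p (deviate ex_null t) <= 0.
Proof.
rewrite /= /ex_util; case: (eqVneq p 1) => [->|] //=.
by rewrite /deviate ffunE dfwith_out // ffunE.
Qed.

Lemma ex_follower_gain :
  util ex_game 1 ex_rec < util ex_game 1 (@deviate R ex_game ex_rec 1 true).
Proof. by rewrite /= /ex_util /deviate !ffunE dfwith_in dfwith_out //= !ffunE ltr1n. Qed.

End Counterexample.

Theorem mainTheorem15 (R : rcfType) :
  exists (G : game R) (L F : {set player G}),
    [/\ (0 < nplayers G)%N, L :|: F = setT, L :&: F = set0 &
        exists x : {ffun profile G -> R}, in_XPS_NF x /\ ~ in_XS L F x].
Proof.
exists (ex_game R), [set ord0], [set 1]; split => //.
- by apply/setP=> i; rewrite !inE; case: i => [[|[|]]].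
- by apply/setP=> i; rewrite !inE; case: i => [[|[|]]].
exists (dirac (ex_rec R)); split.
  apply: (XPS_NF_of_null_equilibrium (z0 := ex_null R)); last exact: dirac_dist.
  - exact: ex_util_ge0.
  - exact: ex_util_null.
  - exact: ex_util_null_dev.
move/XS_CE_followers; exact: profitable_deviation_not_CE (set11 _) (ex_follower_gain R).
Qed.
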